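(* Let $\mathfrak{A}$ be an abstract calculus with upward space $\mathrm{Up}(\mathfrak{A})=(\mathbf{S},\eqslantless)$. Then $\eqslantless$ is a connected partial order on $\mathbf S$. Moreover, taking $\mathfrak{B}\wedge\mathfrak{C}=\inf\{\mathfrak{B},\mathfrak{C}\}$ and $\mathfrak{B}\vee\mathfrak{C}=\sup\{\mathfrak{B},\mathfrak{C}\}$ with respect to $\eqslantless$, $(\mathbf{S},\wedge,\vee)$ is a complete lattice whose bottom element is $\mathfrak{A}$.
   Context: Fix a non-empty finite set $\mathtt{E}$ of edge types and a countably infinite set $\mathtt S$ of sequents (atomic labels). G-sequents are finite graphs with vertex set $\mathcal V$, edge relations $\mathcal E_a\subseteq\mathcal V\times\mathcal V$ for $a\in\mathtt E$, and vertex labels in $\mathtt S$; written $\Gamma\vdash\Delta$ with $\Gamma$ the set of edge atoms $w\mathcal E_a u$ and $\Delta$ the set of prefixed sequents $w:S$. Let $\overline{\mathtt E}=\{\bar a\mid a\in\mathtt E\}$, $\bar{\bar z}=z$, $\overline{x_1\cdots x_n}=\bar x_n\cdots\bar x_1$. An $\mathtt E$-system is a finite set $\mathbf G$ of production rules $x\longrightarrow t$ ($x\in\mathtt E\cup\overline{\mathtt E}$, $t$ a string over $\mathtt E\cup\overline{\mathtt E}$) with $x\longrightarrow t\in\mathbf G$ iff $\bar x\longrightarrow\bar t\in\mathbf G$; $\mathbf G(a)=\{t\mid a\longrightarrow^*_{\mathbf G}t\}$. Rules of an abstract calculus are of the kinds: initial rules $i(C,R)$ and reachability rules $r(\mathcal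 C,R)$, whose applicability is governed by constraints $C$ (resp. constraint families $\mathcal C$), i.e. trees whose edges are labelled by languages $\mathbf G'(a)$ ($a\in\mathtt E$, $\mathbf G'$ an $\mathtt E$-system) requiring $\mathbf G'(a)$-labelled paths in the g-sequent, and by sequent constraints $R$; local rules and expansion rules (no constraints); and Horn rules: for $a\in\mathtt E$ and a string $s=x_1\cdots x_n$, the forward Horn rule with premise $\Gamma,w\mathcal E_s u,w\mathcal E_a u\vdash\Delta$ and conclusion $\Gamma,w\mathcal E_s u\vdash\Delta$, and the backward Horn rule with $u\mathcal E_a w$ in place of $w\mathcal E_a u$ (here $w\mathcal E_s u$ abbreviates a chain $w\mathcal E_{x_1}v_1,\dots,v_{n-1}\mathcal E_{x_n}u$, $v\mathcal E_{\bar a}z$ meaning $z\mathcal E_a v$, $w\mathcal E_\varepsilon u$ meaning $w=u$). $\mathbf G(h_f)=\{a\longrightarrow s,\bar a\longrightarrow\bar s\}$, $\mathbf G(h_b)=\{\bar a\longrightarrow s,a\longrightarrow\bar s\}$; $\mathbf G(\mathrm H)$ is the union over a set $\mathrm H$ of Horn rules. Absorb: $C\oplus\mathbf G$ replaces every edge label $\mathbf G'(a)$ by $(\mathbf G'\cup\mathbf G)(a)$ (componentwise on families); $i(C,R)\oplus\mathbf G=i(C\oplus\mathbf G,R)$, $r(\mathcal C,R)\oplus\mathbf G=r(\mathcal C\oplus\mathbf G,R)$. An abstract calculus is $\mathfrak A=(\mathcal G^{\mathtt E},\mathfrak R)$ with $\mathcal G^{\mathtt E}$ the set of g-sequents over $\mathtt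 E$ and $\mathfrak R$ a finite set of such rules; $\mathrm H(\mathfrak A)$ is its set of Horn rules; $\mathfrak A\setminus\mathrm R$ removes rules; $\mathfrak A\oplus\mathbf G$ replaces each initial and reachability rule $\rho$ by $\rho\oplus\mathbf G$. Dependency graph of Horn rules: for a production rule $p=x\longrightarrow t$ let $\bar p=\bar x\longrightarrow\bar t$; each Horn rule $h$ has a production pair $(p,\bar p)$ formed by its grammar. For distinct pairs with $p=x\longrightarrow s$, $p'=y\longrightarrow t$, $(p,\bar p)\sqsubset(p',\bar p')$ iff $s$ or $\bar s$ contains $y$; $\sqsubseteq$ is its reflexive-transitive closure; $\mathsf{DG}(\mathrm H)=(\mathrm H,\sqsubseteq')$ where $h\sqsubseteq'h'$ iff the pair of $h$ is $\sqsubseteq$ the pair of $h'$. $V'$ is fracturable in $(V,\sqsubseteq)$ iff there are no $v\in V'$, $v'\in V\setminus V'$ with $v\sqsubseteq v'$; $V''$ is anti-fracturable iff $V''=V\setminus V'$ for a fracturable $V'$. Upward space $\mathrm{Up}(\mathfrak A)=(\mathbf S,\eqslantless)$, defined inductively: $\mathfrak A\in\mathbf S$; if $\mathfrak B\in\mathbf S$ and $\mathrm H'\subseteq\mathrm H(\mathfrak B)$ is anti-fracturable in $\mathsf{DG}(\mathrm H(\mathfrak B))$, then $\mathfrak C=(\mathfrak B\oplus\mathbf G(\mathrm H'))\setminus\mathrm H'\in\mathbf S$ and $\mathfrak B\eqslantless\mathfrak C$. *)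

From HB Require Import structures.
From mathcomp Require Import all_boot.
From mathcomp Require Import finmap.
From Stdlib Require Import Relations.

Set Implicit Arguments.
Unset Strict Implicit.
Unset Printing Implicit Defensive.

Local Open Scope fset_scope.

Section AbstractCalculi.

(* E : finite (nonemptiness is a hypothesis of the theorem) set of edge types.
   SC : sequent constraints R; LR, ER : local and expansion rules.  These are
   left abstract (the upward space does not inspect them). *)
Variables (E : finType) (SC LR ER : choiceType).

(* letters of E ∪ Ē : (a, false) = a,  (a, true) = ā *)
Definition letter := (E * bool)%type.
Definition lett (a : E) : letter := (a, false).
Definition bar (x : letter) : letter := (x.1, ~~ x.2).
Definition bars (s : seq letter) : seq letter := rev (map bar s).

Definition production := (letter * seq letter)%type.
Definition esystem := {fset production}.
Definition is_esystem (G : esystem) : Prop :=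
  forall x t, ((x, t) \in G) = ((bar x, bars t) \in G).

Inductive derives (G : esystem) : seq letter -> seq letter -> Prop :=
| der_refl u : derives G u u
| der_step u x v t w : (x, t) \in G -> derives G (u ++ t ++ v) w ->
    derives G (u ++ x :: v) w.
Definition lang (G : esystem) (a : E) : seq letter -> Prop := derives G [:: lett a].

(* an edge label of a constraint: the language G'(a), presented by (G', a) *)
Definition label := (esystem * E)%type.
Definition label_lang (l : label) := lang l.1 l.2.
(* a constraint: a tree given by its labelled edges (parent, child, label) *)
Definition constraint := seq (nat * nat * label).

Inductive rule :=
| RInit of constraint & SC
| RReach of seq constraint & SC
| RLocal of LR
| RExp of ER
| RHornF of E & seq letter
| RHornB of E & seq letter.

Definition rule_code :=
  ((constraint * SC) + ((seq constraint * SC) + (LR + (ER +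
    ((E * seq letter) + (E * seq letter))))))%type.

Definition rule_enc (r : rule) : rule_code :=
  match r with
  | RInit C R => inl (C, R)
  | RReach Cs R => inr (inl (Cs, R))
  | RLocal l => inr (inr (inl l))
  | RExp e => inr (inr (inr (inl e)))
  | RHornF a s => inr (inr (inr (inr (inl (a, s)))))
  | RHornB a s => inr (inr (inr (inr (inr (a, s)))))
  end.

Definition rule_dec (c : rule_code) : rule :=
  match c with
  | inl (C, R) => RInit C R
  | inr (inl (Cs, R)) => RReach Cs R
  | inr (inr (inl l)) => RLocal l
  | inr (inr (inr (inl e))) => RExp e
  | inr (inr (inr (inr (inl (a, s))))) => RHornF a s
  | inr (inr (inr (inr (inr (a, s))))) => RHornB a s
  end.

Lemma rule_encK : cancel rule_enc rule_dec.
Proof. by case. Qed.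

HB.instance Definition _ := Choice.copy rule (can_type rule_encK).

(* an abstract calculus (G^E, ℜ): G^E is fixed, so it is given by ℜ *)
Record calculus := Calculus { rules : {fset rule} }.

Definition constr_systems (C : constraint) : seq esystem := map (fun e => e.2.1) C.
Definition rule_systems (r : rule) : seq esystem :=
  match r with
  | RInit C _ => constr_systems C
  | RReach Cs _ => flatten (map constr_systems Cs)
  | _ => [::]
  end.
Definition calc_wf (A : calculus) : Prop :=
  forall r, r \in rules A -> forall G, G \in rule_systems r -> is_esystem G.

Definition absorb_label (G : esystem) (l : label) : label := (l.1 `|` G, l.2).
Definition absorb_constr (G : esystem) (C : constraint) : constraint :=
  map (fun e => (e.1, absorb_label G e.2)) C.
Definition absorb_rule (G : esystem) (r : rule) : rule :=
  match r with
  | RInit C R => RInit (absorb_constr G C) R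
  | RReach Cs R => RReach (map (absorb_constr G) Cs) R
  | _ => r
  end.
Definition oplus (B : calculus) (G : esystem) : calculus :=
  Calculus [fset absorb_rule G r | r in rules B].
Definition remove (B : calculus) (H : {fset rule}) : calculus :=
  Calculus (rules B `\` H).

Definition is_horn (r : rule) : bool :=
  match r with RHornF _ _ | RHornB _ _ => true | _ => false end.
Definition horns (B : calculus) : {fset rule} := [fset r in rules B | is_horn r].

Definition horn_gram (r : rule) : esystem :=
  match r with
  | RHornF a s => [fset (lett a, s); (bar (lett a), bars s)]
  | RHornB a s => [fset (bar (lett a), s); (lett a, bars s)]
  | _ => fset0
  end.
Definition gram_of (H : {fset rule}) : esystem :=
  \big[fsetU/fset0]_(h <- H) horn_gram h.

(* dependency graph DG(V) of a set V of Horn rules.  A production pair (p, p̄)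
   is represented by the set {p, p̄} = horn_gram h. *)
Definition pair_step (P Q : esystem) : Prop :=
  P != Q /\ exists p q, [/\ p \in P, q \in Q & (q.1 \in p.2) || (q.1 \in bars p.2)].
Definition pairs (V : {fset rule}) : {fset esystem} := [fset horn_gram h | h in V].
Definition pair_le (V : {fset rule}) : relation esystem :=
  clos_refl_trans esystem
    (fun P Q => [/\ P \in pairs V, Q \in pairs V & pair_step P Q]).
Definition dg_le (V : {fset rule}) (h h' : rule) : Prop :=
  pair_le V (horn_gram h) (horn_gram h').

Definition fracturable (V V' : {fset rule}) : Prop :=
  V' `<=` V /\
  ~ (exists v v', [/\ v \in V', v' \in V `\` V' & dg_le V v v']).
Definition anti_fracturable (V V'' : {fset rule}) : Prop :=
  exists V', fracturable V V' /\ V'' = V `\` V'.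

Definition upd (B : calculus) (H : {fset rule}) : calculus :=
  remove (oplus B (gram_of H)) H.

Inductive in_up (A : calculus) : calculus -> Prop :=
| up_base : in_up A A
| up_next B H : in_up A B -> anti_fracturable (horns B) H -> in_up A (upd B H).

Definition up_le (A : calculus) (B C : calculus) : Prop :=
  in_up A B /\ exists H, anti_fracturable (horns B) H /\ C = upd B H.

Definition is_lub (S : calculus -> Prop) (le : calculus -> calculus -> Prop)
    (X : calculus -> Prop) (s : calculus) : Prop :=
  S s /\ (forall x, X x -> le x s) /\
  (forall u, S u -> (forall x, X x -> le x u) -> le s u).
Definition is_glb (S : calculus -> Prop) (le : calculus -> calculus -> Prop)
    (X : calculus -> Prop) (i : calculus) : Prop :=
  S i /\ (forall x, X x -> le i x) /\
  (forall u, S u -> (forall x, X x -> le u x) -> le u i).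

End AbstractCalculi.

(* Let V be the set of Horn rules of the calculus A.  A step of Up(A) removes
   an anti-fracturable set H' of Horn rules (a set closed under predecessors in
   the dependency graph) and absorbs its grammar into the constraints.  Since
   absorption is additive (absorbing G and then G' is absorbing G ∪ G') and
   only touches non-Horn rules, every element of S is of the form  upd A H
   for a single predecessor-closed H ⊆ V, and H can be read off upd A H as
   V \ horns (upd A H).  Moreover a set that is predecessor-closed in V \ H
   after removing H is, together with H, predecessor-closed in V.  Hence
   H ↦ upd A H is an order isomorphism between the predecessor-closed subsets
   of V under inclusion and (S, ⩽).  All claims of the theorem are then facts
   about a family of subsets closed under arbitrary intersections and unions:
   ⩽ is a partial order, A = upd A ∅ is the least element (so S is
   connected), and meets and joins are intersections and unions. *)

From mathcomp Require Import all_boot finmap.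
From mathcomp Require boolp.
From Stdlib Require Import Relations.

Set Implicit Arguments.
Unset Strict Implicit.
Unset Printing Implicit Defensive.

Local Open Scope fset_scope.

Section UpwardSpace.

Variables (E : finType) (SC LR ER : choiceType).
Notation rule := (rule E SC LR ER).
Notation calculus := (calculus E SC LR ER).
Implicit Types (A B : calculus) (r : rule) (V H : {fset rule}).

Lemma gram_ofP H p :
  reflect (exists2 h, h \in H & p \in horn_gram h) (p \in gram_of H).
Proof.
by apply: (iffP (bigfcupP _ _ _ _)) => -[h hH ph]; exists h; rewrite ?andbT in hH *.
Qed.

Lemma gram_of0 : gram_of (fset0 : {fset rule}) = fset0.
Proof. by apply/fsetP => p; rewrite inE; apply/gram_ofP => -[h]; rewrite inE. Qed.

Lemma gram_ofU H H' : gram_of (H `|` H') = gram_of H `|` gram_of H'.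
Proof.
apply/fsetP => p; rewrite inE; apply/gram_ofP/orP.
  by case=> h; rewrite inE => /orP[] hH ph; [left | right]; apply/gram_ofP; exists h.
by case=> /gram_ofP[h hH ph]; exists h; rewrite // inE hH ?orbT.
Qed.

Lemma absorb_is_horn G r : is_horn (absorb_rule G r) = is_horn r.
Proof. by case: r. Qed.

Lemma absorb_horn G r : is_horn r -> absorb_rule G r = r.
Proof. by case: r. Qed.

Lemma absorb_constr0 (C : constraint E) : absorb_constr fset0 C = C.
Proof. by elim: C => [|[[p c] [g a]] C IH] //=; rewrite /absorb_label fsetU0 IH. Qed.

Lemma absorb_rule0 r : absorb_rule fset0 r = r.
Proof.
case: r => //= [C R|Cs R]; first by rewrite absorb_constr0.
by rewrite (eq_map absorb_constr0) map_id.
Qed.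

Lemma absorb_constrA G G' (C : constraint E) :
  absorb_constr G' (absorb_constr G C) = absorb_constr (G `|` G') C.
Proof. by elim: C => [|[[p c] [g a]] C IH] //=; rewrite /absorb_label fsetUA IH. Qed.

Lemma absorb_ruleA G G' r :
  absorb_rule G' (absorb_rule G r) = absorb_rule (G `|` G') r.
Proof.
case: r => //= [C R|Cs R]; first by rewrite absorb_constrA.
by rewrite -map_comp (eq_map (absorb_constrA G G')).
Qed.

Lemma horns_upd B H : horns (upd B H) = horns B `\` H.
Proof.
apply/fsetP => r; rewrite !inE; case: (r \in H) => //=.
apply/andP/andP => [[/imfsetP[r0 /= r0B ->]]|[rB hr]].
  by rewrite absorb_is_horn => hr0; rewrite absorb_horn.
by split=> //; apply/imfsetP; exists r; rewrite ?absorb_horn.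
Qed.

Lemma upd0 B : upd B fset0 = B.
Proof.
case: B => R; rewrite /upd /remove /oplus /= gram_of0 fsetD0; congr Calculus.
apply/fsetP => r; apply/imfsetP/idP => [[r0 /= r0R ->]|rR].
  by rewrite absorb_rule0.
by exists r; rewrite ?absorb_rule0.
Qed.

Lemma absorb_mem G r H : {in H, forall h, is_horn h} ->
  (absorb_rule G r \in H) = (r \in H).
Proof.
move=> Hhorn; case hr: (is_horn r); first by rewrite absorb_horn.
by apply/idP/idP => /Hhorn; rewrite ?absorb_is_horn hr.
Qed.

(* Removed rules are Horn rules, which absorption fixes; hence the removal of
   H commutes with the second absorption. *)
Lemma upd_upd B H H' : {in H, forall h, is_horn h} ->
  upd (upd B H) H' = upd B (H `|` H').
Proof.
move=> Hhorn; rewrite /upd /remove /oplus /= gram_ofU; congr Calculus.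
apply/fsetP => x; rewrite !inE negb_or; case: (x \in H') => /=; rewrite ?andbF ?andbT //.
apply/imfsetP/andP.
  move=> [y /[!inE] /andP[yH /imfsetP[r /= rB Ey]] ->].
  rewrite Ey absorb_ruleA !(absorb_mem _ _ Hhorn) in yH *.
  by split=> //; apply/imfsetP; exists r.
move=> [xH /imfsetP[r /= rB Ex]]; rewrite Ex (absorb_mem _ _ Hhorn) in xH *.
exists (absorb_rule (gram_of H) r); last by rewrite absorb_ruleA.
by rewrite inE (absorb_mem _ _ Hhorn) xH; apply/imfsetP; exists r.
Qed.

Definition dg_closed V H : Prop :=
  H `<=` V /\ forall v v', v \in V -> v' \in H -> dg_le V v v' -> v \in H.

Lemma anti_fracturableP V H : anti_fracturable V H <-> dg_closed V H.
Proof.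
split=> [[V' [[V'V noedge] ->]]|[HV closed]].
  split=> [|v v' vV]; first exact: fsubsetDl.
  rewrite !inE vV andbT => /andP[v'V' v'V] dg; apply: contraT => /negPn vV'.
  by case: noedge; exists v, v'; rewrite !inE v'V' v'V.
exists (V `\` H); split; last first.
  apply/fsetP => x; rewrite !inE; case xH: (x \in H); last by case: (x \in V).
  by rewrite (fsubsetP HV x xH).
split=> [|[v [v' [vV' v'V dg]]]]; first exact: fsubsetDl.
rewrite !inE in vV' v'V; case/andP: vV' => /negP vH vV.
have v'H : v' \in H by move: v'V; case: (v' \in H) => //; rewrite andNb.
exact/vH/(closed v v').
Qed.

Lemma pair_le_mono W V (P Q : esystem E) :
  W `<=` V -> pair_le W P Q -> pair_le V P Q.
Proof.
move=> WV; elim=> [{}P {}Q [/imfsetP[h hW ->] /imfsetP[h' h'W ->] step]|{}P|].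
- apply: rt_step; split=> //; apply/imfsetP.
  + by exists h => //; apply: (fsubsetP WV).
  + by exists h' => //; apply: (fsubsetP WV).
- exact: rt_refl.
- by move=> P1 P2 P3 _ IH12 _ IH23; apply: rt_trans IH12 IH23.
Qed.

Lemma dg_le_restrict W V : W `<=` V ->
  (forall w u, w \in W -> u \in V -> dg_le V w u -> u \in W) ->
  forall w u, w \in W -> dg_le V w u -> dg_le W w u.
Proof.
move=> WV Wclosed w u wW; rewrite /dg_le /pair_le => /clos_rt_rt1n_iff.
move: (horn_gram u) => Q; move Ew: (horn_gram w) => P path.
elim: path w wW Ew => [P0|P1 P2 P3 [P1V /imfsetP[u' u'V E2] step12] _ IH] w wW Ew.
  exact: rt_refl.
have wP1 : P1 \in pairs W by rewrite -Ew; apply/imfsetP; exists w.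
have u'W : u' \in W.
  apply: (Wclosed w u' wW u'V); rewrite /dg_le Ew -E2; apply: rt_step.
  by split=> //; rewrite E2; apply/imfsetP; exists u'.
apply: rt_trans (IH u' u'W (esym E2)); apply: rt_step; split=> //.
by rewrite E2; apply/imfsetP; exists u'.
Qed.

Lemma dg_closed0 V : dg_closed V fset0.
Proof. by split=> [|v v' _]; rewrite ?fsub0set ?inE. Qed.

(* Two successive steps amount to one: closedness composes. *)
Lemma dg_closed_comp V H H' :
  dg_closed V H -> dg_closed (V `\` H) H' -> dg_closed V (H `|` H').
Proof.
move=> [HV Hclosed] [H'V H'closed]; split.
  by rewrite fsubUset HV (fsubset_trans H'V (fsubsetDl _ _)).
move=> v v' vV; rewrite inE => /orP[v'H|v'H'] dg.
  by rewrite inE (Hclosed v v').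
case: (boolP (v \in H)) => vH; first by rewrite inE vH.
have vW : v \in V `\` H by rewrite inE vH.
have rest_closed w u : w \in V `\` H -> u \in V -> dg_le V w u -> u \in V `\` H.
  rewrite !inE => /andP[wH wV] uV dg'; rewrite uV andbT.
  by apply: contraNN wH => uH; apply: (Hclosed w u).
rewrite inE (H'closed v v') ?orbT //.
exact: (dg_le_restrict (fsubsetDl V H) rest_closed).
Qed.

(* The step between two nested closed sets is itself legal. *)
Lemma dg_closed_diff V H1 H2 : dg_closed V H1 -> dg_closed V H2 -> H1 `<=` H2 ->
  dg_closed (V `\` H1) (H2 `\` H1).
Proof.
move=> [H1V _] [H2V H2closed] H12; split.
  by apply/fsubsetP => x; rewrite !inE => /andP[-> /(fsubsetP H2V) ->].
move=> v v'; rewrite !inE => /andP[vH1 vV] /andP[_ v'H2] dg.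
by rewrite vH1 (H2closed v v') //; apply: pair_le_mono dg; apply: fsubsetDl.
Qed.

Definition dg_meet V (P : {fset rule} -> Prop) : {fset rule} :=
  [fset v in V | boolp.asbool (forall H, P H -> v \in H)].
Definition dg_join V (P : {fset rule} -> Prop) : {fset rule} :=
  [fset v in V | boolp.asbool (exists2 H, P H & v \in H)].

Lemma dg_meetP V P v :
  (v \in dg_meet V P) = (v \in V) && boolp.asbool (forall H, P H -> v \in H).
Proof. by rewrite !inE. Qed.

Lemma dg_joinP V P v :
  (v \in dg_join V P) = (v \in V) && boolp.asbool (exists2 H, P H & v \in H).
Proof. by rewrite !inE. Qed.

Lemma dg_closed_meet V P : (forall H, P H -> dg_closed V H) -> dg_closed V (dg_meet V P).
Proof.
move=> Pclosed; split; first by apply/fsubsetP => v; rewrite dg_meetP => /andP[].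
move=> v v' vV; rewrite !dg_meetP vV => /andP[_ /boolp.asboolP v'P] dg.
by apply/boolp.asboolP => H PH; apply: (Pclosed H PH).2 (v'P H PH) dg.
Qed.

Lemma dg_closed_join V P : (forall H, P H -> dg_closed V H) -> dg_closed V (dg_join V P).
Proof.
move=> Pclosed; split; first by apply/fsubsetP => v; rewrite dg_joinP => /andP[].
move=> v v' vV; rewrite !dg_joinP vV => /andP[_ /boolp.asboolP[H PH v'H]] dg.
by apply/boolp.asboolP; exists H => //; apply: (Pclosed H PH).2 v'H dg.
Qed.

Lemma dg_closed_horn B H : dg_closed (horns B) H -> {in H, forall h, is_horn h}.
Proof. by move=> [HV _] h /(fsubsetP HV); rewrite inE => /andP[]. Qed.

Lemma in_upP A B :
  in_up A B <-> exists2 H, dg_closed (horns A) H & B = upd A H.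
Proof.
split=> [|[H HA ->]]; last by apply: up_next (up_base A) _; apply/anti_fracturableP.
elim=> [|B' H' _ [H HA ->] /anti_fracturableP H'B].
  by exists fset0; rewrite ?upd0 ?dg_closed0.
exists (H `|` H'); first by apply: dg_closed_comp HA _; rewrite -horns_upd.
by rewrite upd_upd //; apply: dg_closed_horn HA.
Qed.

Lemma upd_inj A H1 H2 : dg_closed (horns A) H1 -> dg_closed (horns A) H2 ->
  upd A H1 = upd A H2 -> H1 = H2.
Proof.
move=> [H1A _] [H2A _] /(congr1 (@horns _ _ _ _)); rewrite !horns_upd => /fsetP eqD.
apply/fsetP => x; have := eqD x; rewrite !in_fsetD.
case x1: (x \in H1); case x2: (x \in H2) => //=.
  by rewrite (fsubsetP H1A x x1).
by rewrite (fsubsetP H2A x x2).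
Qed.

Lemma up_leP A H1 H2 : dg_closed (horns A) H1 -> dg_closed (horns A) H2 ->
  up_le A (upd A H1) (upd A H2) <-> H1 `<=` H2.
Proof.
move=> H1A H2A; have H1horn := dg_closed_horn H1A; split.
  move=> [_ [H' [/anti_fracturableP H'B]]]; rewrite upd_upd //.
  have H1H'A : dg_closed (horns A) (H1 `|` H').
    by apply: dg_closed_comp H1A _; rewrite -horns_upd.
  by move=> /(upd_inj H2A H1H'A) ->; apply: fsubsetUl.
move=> H12; split; first by apply/in_upP; exists H1.
exists (H2 `\` H1); split.
  by apply/anti_fracturableP; rewrite horns_upd; apply: dg_closed_diff.
by rewrite upd_upd // fsetUDl fsetDv fsetD0 (fsetUidPr _ _ H12).
Qed.

Lemma up_le_in_up A B C : up_le A B C -> in_up A B /\ in_up A C.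
Proof. by move=> [AB [H [HB ->]]]; split=> //; apply: up_next. Qed.

(* Through the embedding, ⩽ inherits reflexivity, antisymmetry and
   transitivity from inclusion, with A = upd A ∅ as least element. *)
Lemma up_le_refl A B : in_up A B -> up_le A B B.
Proof. by case/in_upP=> H HA ->; apply/(up_leP HA HA). Qed.

Lemma up_le_antisym A B C : in_up A B -> in_up A C ->
  up_le A B C -> up_le A C B -> B = C.
Proof.
case/in_upP=> [H1 H1A ->]; case/in_upP=> [H2 H2A ->].
move=> /(up_leP H1A H2A) H12 /(up_leP H2A H1A) H21.
by congr upd; apply/eqP; rewrite eqEfsubset H12 H21.
Qed.

Lemma up_le_trans A B C D : up_le A B C -> up_le A C D -> up_le A B D.
Proof.
move=> BC CD; have [/in_upP[H1 H1A EB] /in_upP[H2 H2A EC]] := up_le_in_up BC.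
have [_ /in_upP[H3 H3A ED]] := up_le_in_up CD.
move: BC CD; rewrite EB EC ED => /(up_leP H1A H2A) H12 /(up_leP H2A H3A) H23.
by apply/(up_leP H1A H3A); apply: fsubset_trans H23.
Qed.

Lemma up_le_bottom A B : in_up A B -> up_le A A B.
Proof.
by case/in_upP=> H HA ->; rewrite -{2}(upd0 A); apply/(up_leP (dg_closed0 _) HA); apply: fsub0set.
Qed.

(* Any two elements are connected through the bottom element A. *)
Lemma up_connected A B C : in_up A B -> in_up A C ->
  clos_refl_sym_trans _ (up_le A) B C.
Proof.
move=> AB AC; apply: rst_trans (rst_sym _ _ _ _ (rst_step _ _ _ _ (up_le_bottom AB))) _.
exact: rst_step (up_le_bottom AC).
Qed.

Definition codes A (X : calculus -> Prop) (H : {fset rule}) : Prop :=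
  dg_closed (horns A) H /\ X (upd A H).

(* The infimum of X ⊆ S removes the intersection of the sets coding X. *)
Lemma up_glb A (X : calculus -> Prop) : (forall B, X B -> in_up A B) ->
  exists i, is_glb (in_up A) (up_le A) X i.
Proof.
move=> XS; set I := dg_meet (horns A) (codes A X).
have IA : dg_closed (horns A) I by apply: dg_closed_meet => H [].
exists (upd A I); split; first by apply/in_upP; exists I.
split=> [B XB|B /in_upP[K KA ->] lower].
  have [H HA EB] := (in_upP A B).1 (XS B XB); rewrite EB in XB *.
  apply/(up_leP IA HA); apply/fsubsetP => v.
  by rewrite dg_meetP => /andP[_ /boolp.asboolP]; apply; split.
apply/(up_leP KA IA); apply/fsubsetP => v vK; rewrite dg_meetP (fsubsetP KA.1 v vK).
by apply/boolp.asboolP => H [HA XH]; apply: (fsubsetP ((up_leP KA HA).1 (lower _ XH))).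
Qed.

(* The supremum of X ⊆ S removes the union of the sets coding X. *)
Lemma up_lub A (X : calculus -> Prop) : (forall B, X B -> in_up A B) ->
  exists s, is_lub (in_up A) (up_le A) X s.
Proof.
move=> XS; set U := dg_join (horns A) (codes A X).
have UA : dg_closed (horns A) U by apply: dg_closed_join => H [].
exists (upd A U); split; first by apply/in_upP; exists U.
split=> [B XB|B /in_upP[K KA ->] upper].
  have [H HA EB] := (in_upP A B).1 (XS B XB); rewrite EB in XB *.
  apply/(up_leP HA UA); apply/fsubsetP => v vH; rewrite dg_joinP (fsubsetP HA.1 v vH).
  by apply/boolp.asboolP; exists H.
apply/(up_leP UA KA); apply/fsubsetP => v.
rewrite dg_joinP => /andP[_ /boolp.asboolP[H [HA XH] vH]].
exact: (fsubsetP ((up_leP HA KA).1 (upper _ XH))).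
Qed.

End UpwardSpace.

Theorem mainTheorem10 (E : finType) (SC LR ER : choiceType)
    (A : calculus E SC LR ER) :
  0 < #|E| -> calc_wf A ->
  (* ⩽ is a partial order on S *)
  ((forall B, in_up A B -> up_le A B B) /\
   (forall B C, in_up A B -> in_up A C -> up_le A B C -> up_le A C B -> B = C) /\
   (forall B C D, up_le A B C -> up_le A C D -> up_le A B D)) /\
  (* ⩽ is connected on S *)
  (forall B C, in_up A B -> in_up A C ->
     clos_refl_sym_trans _ (up_le A) B C) /\
  (* (S, ∧, ∨) is a complete lattice: every subset of S has an inf and a sup *)
  (forall X : calculus E SC LR ER -> Prop, (forall B, X B -> in_up A B) ->
     (exists i, is_glb (in_up A) (up_le A) X i) /\
     (exists s, is_lub (in_up A) (up_le A) X s)) /\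
  (* with bottom element 𝔄 *)
  (in_up A A /\ forall B, in_up A B -> up_le A A B).
Proof.
move=> _ _; split; first split; last split.
- exact: up_le_refl.
- by split; [exact: up_le_antisym | exact: up_le_trans].
- exact: up_connected.
split=> [X XS|]; first by split; [exact: up_glb | exact: up_lub].
by split; [exact: up_base | exact: up_le_bottom].
Qed.
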